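(* There is an absolute constant $C>0$ such that the following holds. Let $n\ge 1$, $r\ge 1$, $\delta>0$ with $\delta n\ge 1$, and $\hat\epsilon>0$. Let $P_\tau$ be a set of $n_\tau\le n$ points in $\mathbb{R}^2$ in general position, partitioned into classes (''cells'') each of size at most $n/r^2$; for $p\in P_\tau$ let $P_{\mu(p)}$ be the class of $p$. For each $p\in P_\tau$, list the $n_\tau-1$ other points of $P_\tau$ in clockwise angular order around $p$ and split this list into consecutive blocks ${\cal E}_0,\dots,{\cal E}_{z-1}$, each but the last containing exactly $\lceil 2\delta n\rceil$ points and the last containing at most $\lceil 2\delta n\rceil$ points. If $z\ge 3$, define the $z$ sectors ${\cal W}_j(p)={\cal E}_j\cup{\cal E}_{j+1}\cup{\cal E}_{j+2}$ (indices modulo $z$), $0\le j\le z-1$; if $z<3$, define a single sector ${\cal W}_0(p)=P_\tau\setminus\{p\}$. Call a sector ${\cal W}_j(p)$ rich if it contains at least $\hat\epsilon n/10$ points of $P_{\mu(p)}\setminus\{p\}$. Let $\Pi$ be the set of pairs $\{p,q\}\subseteq P_\tau$ such that $q$ lies in a rich sector of $p$ or $p$ lies in a rich sector of $q$. Then $$|\Pi|\le C\,\frac{\delta n^2}{r^2\hat\epsilon}.$$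
   Context: General position: no three points collinear and no two on a common vertical line. *)

From Stdlib Require Import Reals Lra Lia List Arith ZArith Bool.
Open Scope bool_scope.
Open Scope R_scope.

Definition point := (R * R)%type.

Definition ceilZ (x : R) : Z := (- Int_part (- x))%Z.

(* orientation determinant; three points are collinear iff it vanishes *)
Definition orient (a b c : point) : R :=
  (fst b - fst a) * (snd c - snd a) - (snd b - snd a) * (fst c - fst a).

Definition general_position (P : list point) : Prop :=
  (forall i j, (i < j < length P)%nat -> fst (nth i P (0,0)) <> fst (nth j P (0,0))) /\
  (forall i j k, (i < j)%nat -> (j < k)%nat -> (k < length P)%nat ->
     orient (nth i P (0,0)) (nth j P (0,0)) (nth k P (0,0)) <> 0).

(* l lists points in clockwise angular order around p (starting anywhere):
   q_i - p = rad_i (cos th_i, - sin th_i) with rad_i > 0 and the clockwise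
   angles th_i strictly increasing within one full turn. *)
Definition cw_sorted (p : point) (l : list point) : Prop :=
  exists th rad : nat -> R,
    (forall i, (i < length l)%nat ->
       0 < rad i /\
       fst (nth i l p) - fst p = rad i * cos (th i) /\
       snd (nth i l p) - snd p = - (rad i * sin (th i))) /\
    (forall i j, (i < j < length l)%nat -> th i < th j) /\
    (forall i, (i < length l)%nat -> th i < th 0%nat + 2 * PI).

(* number of sectors z = ceil(m / k) blocks for a list of m points, block size k *)
Definition nblocks (m k : nat) : nat := ((m + k - 1) / k)%nat.

(* the point at position i of the angular list (block index i / k) lies in
   sector W_j; z = number of blocks. *)
Definition in_sector (z k i j : nat) : bool :=
  if (3 <=? z)%nat then
    let b := (i / k)%nat in
    (b =? j)%nat || (b =? (j + 1) mod z)%nat || (b =? (j + 2) mod z)%nat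
  else (j =? 0)%nat.

Definition nsectors (z : nat) : nat := if (3 <=? z)%nat then z else 1%nat.

Definition sector_cell_count (mu : point -> nat) (p : point) (l : list point)
    (k j : nat) : nat :=
  let z := nblocks (length l) k in
  length (filter (fun i => in_sector z k i j && (mu (nth i l p) =? mu p)%nat)
                 (seq 0 (length l))).

Definition in_rich_sector (mu : point -> nat) (eps : R) (n : nat)
    (p : point) (l : list point) (k : nat) (q : point) : Prop :=
  let z := nblocks (length l) k in
  exists j, (j < nsectors z)%nat /\
    INR (sector_cell_count mu p l k j) >= eps * INR n / 10 /\
    exists i, (i < length l)%nat /\ nth i l p = q /\ in_sector z k i j = true.

(* Fix p and let k = ceil(2 delta n) be the block size.  A sector is the union of
   three consecutive blocks, so it holds at most 3k points, and each point lies
   in at most three sectors.  Hence the cell counts of all sectors of p add up to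
   at most 3 |P_mu(p)| <= 3 n / r^2, so p has at most 30 / (eps r^2) rich sectors
   and at most 90 k / (eps r^2) points in rich sectors.  Charging every pair of Pi
   to an endpoint that sees the other one in a rich sector gives
   |Pi| <= 2 n * 90 k / (eps r^2) <= 540 delta n^2 / (r^2 eps), as k <= 3 delta n. *)

From Stdlib Require Import Reals List Arith ZArith Lia Lra.
Open Scope R_scope.

Lemma map_nth_seq {A} (l : list A) d :
  map (fun i => nth i l d) (seq 0 (length l)) = l.
Proof.
  induction l as [|a l IH]; [reflexivity|].
  cbn [length seq map nth]. rewrite <- seq_shift, map_map. cbn. now rewrite IH.
Qed.

Lemma length_filter_positions {A} (f : A -> bool) (l : list A) d :
  length (filter (fun i => f (nth i l d)) (seq 0 (length l))) = length (filter f l).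
Proof.
  rewrite <- (length_map (fun i => nth i l d)), <- filter_map_swap.
  now rewrite map_nth_seq.
Qed.

Lemma length_filter_orb {A} (f g : A -> bool) l :
  (length (filter (fun x => f x || g x) l) <= length (filter f l) + length (filter g l))%nat.
Proof. induction l; simpl; [lia|]. destruct (f a), (g a); simpl; lia. Qed.

Lemma length_filter_impl {A} (f g : A -> bool) l :
  (forall x, In x l -> f x = true -> g x = true) ->
  (length (filter f l) <= length (filter g l))%nat.
Proof.
  induction l as [|a l IH]; simpl; intros H; [lia|].
  specialize (IH (fun x Hx => H x (or_intror Hx))).
  destruct (f a) eqn:E; [rewrite (H a (or_introl eq_refl) E); simpl; lia|].
  destruct (g a); simpl; lia.
Qed.

Lemma length_filter_eqb_le_1 {A} (f : A -> nat) b l :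
  NoDup (map f l) -> (length (filter (fun x => b =? f x)%nat l) <= 1)%nat.
Proof.
  induction l as [|a l IH]; simpl; intros H; [lia|].
  inversion_clear H as [|? ? Hnotin Hnd].
  destruct (b =? f a)%nat eqn:E; simpl; [|auto].
  apply Nat.eqb_eq in E; subst b.
  enough (length (filter (fun x => f a =? f x)%nat l) <= 0)%nat by lia.
  replace 0%nat with (length (filter (fun _ : A => false) l))
    by now rewrite filter_false.
  apply length_filter_impl.
  intros x Hx Hfx. apply Nat.eqb_eq in Hfx. exfalso.
  apply Hnotin. rewrite Hfx. now apply in_map.
Qed.

Lemma list_sum_map_le_const {A} (f : A -> nat) c l :
  (forall x, In x l -> (f x <= c)%nat) -> (list_sum (map f l) <= c * length l)%nat.
Proof.
  induction l as [|a l IH]; simpl; intros H; [lia|].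
  pose proof (H a (or_introl eq_refl)). pose proof (IH (fun x Hx => H x (or_intror Hx))). lia.
Qed.

Lemma INR_list_sum_map_le {A} (f : A -> nat) l B :
  (forall x, In x l -> INR (f x) <= B) -> INR (list_sum (map f l)) <= INR (length l) * B.
Proof.
  induction l as [|a l IH]; intros H; [simpl; lra|].
  change (INR (f a + list_sum (map f l)) <= INR (S (length l)) * B).
  rewrite plus_INR, S_INR.
  pose proof (H a (or_introl eq_refl)). pose proof (IH (fun x Hx => H x (or_intror Hx))). lra.
Qed.

Lemma list_sum_filter_swap (A : nat -> nat -> bool) (I J : list nat) :
  list_sum (map (fun j => length (filter (fun i => A i j) I)) J) =
  list_sum (map (fun i => length (filter (fun j => A i j) J)) I).
Proof.
  induction I as [|a I IH]; simpl.
  - induction J; simpl; auto.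
  - rewrite <- IH. clear IH. induction J as [|b J IHJ]; simpl; [lia|].
    destruct (A a b); simpl; lia.
Qed.

Lemma length_filter_existsb_le (R : nat -> bool) (A : nat -> nat -> bool) (I J : list nat) :
  (length (filter (fun i => existsb (fun j => R j && A i j) J) I) <=
   list_sum (map (fun j => length (filter (fun i => A i j) I)) (filter R J)))%nat.
Proof.
  induction J as [|a J IH]; simpl.
  - induction I; simpl; auto.
  - eapply Nat.le_trans; [apply (length_filter_orb (fun i => R a && A i a))|].
    destruct (R a); simpl; [lia|].
    rewrite filter_false. simpl. lia.
Qed.

Lemma add_mod_inj z c x y : (c <= z)%nat -> (x < z)%nat -> (y < z)%nat ->
  ((x + c) mod z = (y + c) mod z)%nat -> x = y.
Proof.
  intros Hc Hx Hy H.
  apply (f_equal (fun t => (t + (z - c)) mod z)%nat) in H.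
  rewrite !Nat.Div0.add_mod_idemp_l in H.
  replace (x + c + (z - c))%nat with (x + 1 * z)%nat in H by lia.
  replace (y + c + (z - c))%nat with (y + 1 * z)%nat in H by lia.
  now rewrite !Nat.Div0.mod_add, !Nat.mod_small in H.
Qed.

Lemma length_filter_shift_eqb_le_1 z c b : (c <= z)%nat ->
  (length (filter (fun j => b =? (j + c) mod z)%nat (seq 0 z)) <= 1)%nat.
Proof.
  intros Hc. apply (length_filter_eqb_le_1 (fun j => (j + c) mod z)%nat).
  apply NoDup_map_NoDup_ForallPairs; [|apply seq_NoDup].
  intros x y Hx Hy. apply in_seq in Hx, Hy. apply add_mod_inj; lia.
Qed.

Lemma length_filter_block_le k b m : (1 <= k)%nat ->
  (length (filter (fun i => i / k =? b)%nat (seq 0 m)) <= k)%nat.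
Proof.
  intros Hk. transitivity (length (seq (b * k) k)); [|now rewrite length_seq].
  apply NoDup_incl_length; [apply NoDup_filter, seq_NoDup|].
  intros x Hx. apply filter_In in Hx as [_ Hx]. apply Nat.eqb_eq in Hx.
  apply in_seq. pose proof (Nat.div_mod_eq x k).
  pose proof (Nat.mod_bound_pos x k ltac:(lia) ltac:(lia)). subst b. nia.
Qed.

Lemma in_sector_count_le_3 z k i :
  (length (filter (in_sector z k i) (seq 0 (nsectors z))) <= 3)%nat.
Proof.
  unfold in_sector, nsectors. destruct (3 <=? z)%nat eqn:Hz; [|simpl; lia].
  apply Nat.leb_le in Hz.
  pose proof (length_filter_orb (fun j => i / k =? j)%nat
                (fun j => i / k =? (j + 1) mod z)%nat (seq 0 z)).
  pose proof (length_filter_orb (fun j => (i / k =? j) || (i / k =? (j + 1) mod z))%nat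
                (fun j => i / k =? (j + 2) mod z)%nat (seq 0 z)).
  assert (length (filter (fun j => i / k =? j)%nat (seq 0 z)) <= 1)%nat.
  { eapply Nat.le_trans; [|apply (length_filter_shift_eqb_le_1 z 0 (i / k)); lia].
    apply length_filter_impl. intros j Hj. apply in_seq in Hj.
    now rewrite Nat.add_0_r, Nat.mod_small by lia. }
  pose proof (length_filter_shift_eqb_le_1 z 1 (i / k) ltac:(lia)).
  pose proof (length_filter_shift_eqb_le_1 z 2 (i / k) ltac:(lia)).
  lia.
Qed.

Lemma sector_length_le k m j : (1 <= k)%nat ->
  (length (filter (fun i => in_sector (nblocks m k) k i j) (seq 0 m)) <= 3 * k)%nat.
Proof.
  intros Hk. unfold in_sector. destruct (3 <=? nblocks m k)%nat eqn:Hz.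
  - set (z := nblocks m k).
    pose proof (length_filter_orb (fun i => i / k =? j)%nat
                  (fun i => i / k =? (j + 1) mod z)%nat (seq 0 m)).
    pose proof (length_filter_orb (fun i => (i / k =? j) || (i / k =? (j + 1) mod z))%nat
                  (fun i => i / k =? (j + 2) mod z)%nat (seq 0 m)).
    pose proof (length_filter_block_le k j m Hk).
    pose proof (length_filter_block_le k ((j + 1) mod z) m Hk).
    pose proof (length_filter_block_le k ((j + 2) mod z) m Hk).
    lia.
  - (* fewer than three blocks: the whole list has at most [2 k] points *)
    apply Nat.leb_gt in Hz. unfold nblocks in Hz.
    eapply Nat.le_trans; [apply filter_length_le|]. rewrite length_seq.
    pose proof (Nat.div_mod_eq (m + k - 1) k).
    pose proof (Nat.mod_bound_pos (m + k - 1) k ltac:(lia) ltac:(lia)). nia.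
Qed.

Section RichSectors.

Variables (mu : point -> nat) (eps : R) (n : nat) (p : point) (l : list point) (k : nat).

Definition rich_sectorb (j : nat) : bool :=
  if Rle_dec (eps * INR n / 10) (INR (sector_cell_count mu p l k j)) then true else false.

Definition sector_indices : list nat := seq 0 (nsectors (nblocks (length l) k)).

Definition rich_positions : list nat :=
  filter (fun i => existsb (fun j => rich_sectorb j && in_sector (nblocks (length l) k) k i j)
                           sector_indices)
         (seq 0 (length l)).

Lemma in_rich_sector_position q :
  in_rich_sector mu eps n p l k q -> exists i, In i rich_positions /\ nth i l p = q.
Proof.
  intros (j & Hj & Hrich & i & Hi & Hq & Hsec). exists i. split; [|exact Hq].
  apply filter_In. split; [apply in_seq; lia|].
  apply existsb_exists. exists j. split; [apply in_seq; lia|].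
  rewrite Hsec. unfold rich_sectorb. destruct Rle_dec; [reflexivity|lra].
Qed.

Lemma rich_positions_length_le : (1 <= k)%nat ->
  (length rich_positions <= 3 * k * length (filter rich_sectorb sector_indices))%nat.
Proof.
  intros Hk. eapply Nat.le_trans; [apply length_filter_existsb_le|].
  apply list_sum_map_le_const. intros j _. now apply sector_length_le.
Qed.

Lemma rich_sectors_length_mul_le J :
  INR (length (filter rich_sectorb J)) * (eps * INR n / 10) <=
  INR (list_sum (map (sector_cell_count mu p l k) J)).
Proof.
  induction J as [|j J IH]; simpl; [lra|].
  rewrite plus_INR. unfold rich_sectorb at 1. destruct Rle_dec; cbn [filter length].
  - rewrite S_INR. lra.
  - pose proof (pos_INR (sector_cell_count mu p l k j)). lra.
Qed.

Lemma sector_cell_counts_sum_le :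
  (list_sum (map (sector_cell_count mu p l k) sector_indices) <=
   3 * length (filter (fun x => mu x =? mu p)%nat l))%nat.
Proof.
  unfold sector_cell_count, sector_indices.
  rewrite list_sum_filter_swap, <- (length_filter_positions _ l p).
  induction (seq 0 (length l)) as [|i I IH]; simpl; [lia|].
  destruct (mu (nth i l p) =? mu p)%nat; simpl.
  - rewrite (filter_ext _ (in_sector _ k i)) by (intros; apply Bool.andb_true_r).
    pose proof (in_sector_count_le_3 (nblocks (length l) k) k i). lia.
  - rewrite (filter_ext _ (fun _ => false)) by (intros; apply Bool.andb_false_r).
    rewrite filter_false. simpl. lia.
Qed.

End RichSectors.

Lemma rich_positions_length_bound mu eps n r (P : list point) p l k :
  (1 <= n)%nat -> 0 < eps -> 0 < r -> (1 <= k)%nat -> NoDup l -> incl l P ->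
  (forall c, INR (length (filter (fun x => mu x =? c)%nat P)) <= INR n / r ^ 2) ->
  INR (length (rich_positions mu eps n p l k)) <= 90 * INR k / (eps * r ^ 2).
Proof.
  intros Hn Heps Hr Hk Hl HlP Hcells.
  set (cnt := length (filter (rich_sectorb mu eps n p l k) (sector_indices l k))).
  assert (Hcell : (length (filter (fun x => mu x =? mu p)%nat l) <=
                   length (filter (fun x => mu x =? mu p)%nat P))%nat).
  { apply NoDup_incl_length; [now apply NoDup_filter|].
    intros x Hx. apply filter_In in Hx as [Hx Hc]. apply filter_In. auto. }
  assert (Hrich : INR cnt * (eps * INR n / 10) <= 3 * (INR n / r ^ 2)).
  { eapply Rle_trans; [apply rich_sectors_length_mul_le|].
    eapply Rle_trans; [apply le_INR, sector_cell_counts_sum_le|].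
    rewrite mult_INR. replace (INR 3) with 3 by (simpl; ring).
    apply Rmult_le_compat_l; [lra|].
    eapply Rle_trans; [apply le_INR, Hcell|apply Hcells]. }
  assert (Hcnt : INR cnt <= 30 / (eps * r ^ 2)).
  { assert (Hr2 : 0 < r ^ 2) by (apply pow_lt; lra).
    assert (Hn0 : 1 <= INR n) by (apply (le_INR 1); exact Hn).
    apply Rmult_le_reg_r with (eps * INR n * r ^ 2 / 10).
    { apply Rmult_lt_0_compat; [|lra]. apply Rmult_lt_0_compat; [nra|lra]. }
    replace (30 / (eps * r ^ 2) * (eps * INR n * r ^ 2 / 10)) with (3 * (INR n / r ^ 2) * r ^ 2)
      by (field; lra).
    replace (INR cnt * (eps * INR n * r ^ 2 / 10)) with (INR cnt * (eps * INR n / 10) * r ^ 2)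
      by (field; lra).
    apply Rmult_le_compat_r; lra. }
  eapply Rle_trans; [apply le_INR, rich_positions_length_le, Hk|].
  rewrite !mult_INR. replace (INR 3) with 3 by (simpl; ring).
  replace (90 * INR k / (eps * r ^ 2)) with (3 * INR k * (30 / (eps * r ^ 2)))
    by (field; lra).
  apply Rmult_le_compat_l; [pose proof (pos_INR k); lra|exact Hcnt].
Qed.

Definition point_eq_dec (x y : point) : {x = y} + {x <> y}.
Proof. decide equality; apply Req_dec_T. Defined.

Lemma length_filter_in_le {A} (dec : forall x y : A, {x = y} + {x <> y}) (P T : list A) :
  NoDup P -> (length (filter (fun x => if in_dec dec x T then true else false) P) <= length T)%nat.
Proof.
  intros HP. apply NoDup_incl_length; [now apply NoDup_filter|].
  intros x Hx. apply filter_In in Hx as [_ Hx]. now destruct in_dec.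
Qed.

Lemma length_pairs_le N (D : nat -> list nat) (L : list (nat * nat)) :
  NoDup L ->
  (forall a b, In (a, b) L -> (a < N)%nat /\ (b < N)%nat /\ (In b (D a) \/ In a (D b))) ->
  (length L <= 2 * list_sum (map (fun a => length (D a)) (seq 0 N)))%nat.
Proof.
  intros HL Hpairs.
  set (E1 := flat_map (fun a => map (fun b => (a, b)) (D a)) (seq 0 N)).
  set (E2 := flat_map (fun b => map (fun a => (a, b)) (D b)) (seq 0 N)).
  assert (Hincl : incl L (E1 ++ E2)).
  { intros [a b] Hab. apply in_or_app.
    destruct (Hpairs a b Hab) as (Ha & Hb & [Hba | Hab']); [left | right];
      apply in_flat_map.
    - exists a. split; [apply in_seq; lia|]. now apply in_map.
    - exists b. split; [apply in_seq; lia|]. now apply (in_map (fun a => (a, b))). }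
  pose proof (NoDup_incl_length HL Hincl) as Hlen.
  rewrite length_app in Hlen. unfold E1, E2 in Hlen. rewrite !length_flat_map in Hlen.
  setoid_rewrite length_map in Hlen.
  lia.
Qed.

Lemma ceilZ_bound x : 2 <= x ->
  (1 <= Z.to_nat (ceilZ x))%nat /\ INR (Z.to_nat (ceilZ x)) < x + 1.
Proof.
  intros Hx. unfold ceilZ, Int_part.
  destruct (archimed (- x)) as [Hup1 Hup2].
  set (c := (- (up (- x) - 1))%Z).
  assert (Hc : IZR c = 1 - IZR (up (- x))) by (unfold c; rewrite opp_IZR, minus_IZR; lra).
  assert (Hc0 : (0 < c)%Z) by (apply lt_0_IZR; lra).
  assert (Hk : INR (Z.to_nat c) = IZR c) by (rewrite INR_IZR_INZ, Z2Nat.id; [reflexivity | lia]).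
  split; [apply INR_le; rewrite Hk; simpl|]; lra.
Qed.

Theorem mainTheorem7 :
  exists C : R, 0 < C /\
  forall (n : nat) (r delta eps : R) (P : list point) (mu : point -> nat)
         (ord : point -> list point),
    (1 <= n)%nat -> 1 <= r -> 0 < delta -> delta * INR n >= 1 -> 0 < eps ->
    NoDup P -> (length P <= n)%nat -> general_position P ->
    (forall c : nat,
       INR (length (filter (fun x => (mu x =? c)%nat) P)) <= INR n / r ^ 2) ->
    (forall p, In p P ->
       NoDup (ord p) /\ (forall q, In q (ord p) <-> (In q P /\ q <> p)) /\
       cw_sorted p (ord p)) ->
    let k := Z.to_nat (ceilZ (2 * delta * INR n)) in
    let Rel p q := in_rich_sector mu eps n p (ord p) k q in
    (* any list of distinct unordered pairs {P_i, P_j} (i < j) belonging to Pi *)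
    forall L : list (nat * nat),
      NoDup L ->
      (forall ij, In ij L ->
         (fst ij < snd ij < length P)%nat /\
         (Rel (nth (fst ij) P (0,0)) (nth (snd ij) P (0,0)) \/
          Rel (nth (snd ij) P (0,0)) (nth (fst ij) P (0,0)))) ->
      INR (length L) <= C * (delta * INR n ^ 2 / (r ^ 2 * eps)).
Proof.
  exists 540. split; [lra|].
  intros n r delta eps P mu ord Hn Hr Hdelta Hdn Heps HP HPn _ Hcells Hord k Rel L HL HLpairs.
  destruct (ceilZ_bound (2 * delta * INR n) ltac:(lra)) as [Hk1 Hk2]. fold k in Hk1, Hk2.
  set (N := length P).
  set (rich_points a := let pa := nth a P (0,0) in
         map (fun i => nth i (ord pa) pa) (rich_positions mu eps n pa (ord pa) k)).
  set (in_rich_points a x := if in_dec point_eq_dec x (rich_points a) then true else false).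
  set (partners a := filter (fun b => in_rich_points a (nth b P (0,0))) (seq 0 N)).
  set (B := 90 * INR k / (eps * r ^ 2)).
  assert (Hpartners : forall a, In a (seq 0 N) -> INR (length (partners a)) <= B).
  { intros a Ha. apply in_seq in Ha; unfold N in Ha. set (pa := nth a P (0,0)).
    assert (HpaP : In pa P) by (apply nth_In; lia).
    destruct (Hord pa HpaP) as (Hnd & Hmem & _).
    eapply Rle_trans.
    - apply le_INR. unfold partners, N. rewrite length_filter_positions.
      apply length_filter_in_le, HP.
    - unfold rich_points. rewrite length_map.
      apply rich_positions_length_bound with P; auto; try lra.
      intros q Hq. apply Hmem in Hq. tauto. }
  assert (HLlen : (length L <= 2 * list_sum (map (fun a => length (partners a)) (seq 0 N)))%nat).
  { apply length_pairs_le; [exact HL|]. intros a b Hab.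
    destruct (HLpairs _ Hab) as [Hlt Hrel]; simpl in Hlt, Hrel.
    do 2 (split; [unfold N; lia|]).
    destruct Hrel as [Hrel | Hrel]; [left | right];
      apply in_rich_sector_position in Hrel as (i & Hi & Hq);
      apply filter_In; (split; [apply in_seq; unfold N; lia|]);
      unfold in_rich_points; destruct in_dec as [|Hnot]; [reflexivity| |reflexivity|];
      exfalso; apply Hnot, in_map_iff; eauto. }
  pose proof (INR_list_sum_map_le _ _ _ Hpartners) as Hsum. rewrite length_seq in Hsum.
  apply le_INR in HLlen. rewrite mult_INR in HLlen.
  assert (HNn : INR N <= INR n) by (apply le_INR, HPn).
  assert (Hr2 : 0 < r ^ 2) by (apply pow_lt; lra).
  assert (HB : 0 <= B <= 270 * delta * INR n / (eps * r ^ 2)).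
  { unfold B, Rdiv. pose proof (pos_INR k).
    assert (0 < / (eps * r ^ 2)) by (apply Rinv_0_lt_compat; nra). split; nra. }
  replace (540 * (delta * INR n ^ 2 / (r ^ 2 * eps)))
    with (2 * (INR n * (270 * delta * INR n / (eps * r ^ 2)))) by (field; lra).
  simpl (INR 2) in HLlen. pose proof (pos_INR N). nra.
Qed.
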